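(* Let $c\in\mathbb{Z}_{\ge1}$ and $\beta\in[0,1]$. If $\varphi(x)=\beta x+(1-\beta)\min(x,c)$, then \[ \alpha_\varphi=1-(1-\beta)\frac{c^c e^{-c}}{c!}. \]
   Context: $\alpha_\varphi=\inf_{x\in\mathbb{Z}_{\ge1}}\frac{\mathbb{E}_{X\sim\mathrm{Pois}(x)}[\varphi(X)]}{\varphi(x)}$. *)

From Stdlib Require Import Reals Arith.
From Coquelicot Require Import Coquelicot.
Open Scope R_scope.

Definition pois_expect (phi : R -> R) (x : R) : R :=
  Series (fun k : nat => exp (- x) * x ^ k / INR (fact k) * phi (INR k)).

Definition alpha_phi (phi : R -> R) : Rbar :=
  Glb_Rbar (fun r : R => exists x : nat, (1 <= x)%nat /\
                 r = pois_expect phi (INR x) / phi (INR x)).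

(* Write m(x) = E[min(X, c)] for X ~ Pois(x); the ratio in alpha_phi at x is
   (beta x + (1 - beta) m(x)) / (beta x + (1 - beta) min(x, c)).  Since
   m'(x) = P(X < c), m is nondecreasing and concave with m(0) = 0, and its closed
   form gives m(c) = c (1 - p), where p = c^c e^-c / c! is P(X = c) at x = c.
   Hence m(x) >= (1 - p) min(x, c) for all x > 0, which bounds the ratio below
   by 1 - (1 - beta) p, with equality at x = c. *)

From Stdlib Require Import Reals Arith Lra Lia.
From Coquelicot Require Import Coquelicot.
From Stdlib Require Import ssreflect.
Open Scope R_scope.

Lemma MVT_closed (f df : R -> R) (a b : R) :
  a <= b -> (forall x, is_derive f x (df x)) ->
  exists c, a <= c <= b /\ f b - f a = df c * (b - a).
Proof.
  move=> Hab Hf.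
  have [|c [Hc ->]] := MVT_gen f a b df (fun x _ => Hf x).
  - move=> x _; apply/continuity_pt_filterlim; apply: ex_derive_continuous.
    by exists (df x).
  - by exists c; move: Hc; rewrite Rmin_left // Rmax_right.
Qed.

Lemma nondecreasing_of_derive_ge0 (f df : R -> R) (a b : R) :
  (forall x, is_derive f x (df x)) -> (forall x, a <= x <= b -> 0 <= df x) ->
  a <= b -> f a <= f b.
Proof.
  move=> Hf Hdf Hab.
  have [c [Hc E]] := MVT_closed f df a b Hab Hf.
  have := Rmult_le_pos _ _ (Hdf c Hc) (ltac:(lra) : 0 <= b - a); lra.
Qed.

Lemma nonincreasing_of_derive_le0 (f df : R -> R) (a b : R) :
  (forall x, is_derive f x (df x)) -> (forall x, a <= x <= b -> df x <= 0) ->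
  a <= b -> f b <= f a.
Proof.
  move=> Hf Hdf Hab.
  suff : - f a <= - f b by lra.
  apply: (nondecreasing_of_derive_ge0 (fun x => - f x) (fun x => - df x)) => //.
  - by move=> x; apply: is_derive_opp.
  - by move=> x Hx; have := Hdf x Hx; lra.
Qed.

Lemma slope_from_0_nonincreasing (f df : R -> R) (a b : R) :
  (forall x, is_derive f x (df x)) -> f 0 = 0 ->
  (forall x y, 0 <= x <= y -> df y <= df x) ->
  0 < a <= b -> f b / b <= f a / a.
Proof.
  move=> Hf Hf0 Hdf [Ha Hab].
  have [c1 [Hc1 E1]] := MVT_closed f df 0 a ltac:(lra) Hf.
  have [c2 [Hc2 E2]] := MVT_closed f df a b Hab Hf.
  have Hc : df c2 <= df c1 by apply: Hdf; lra.
  rewrite Hf0 !Rminus_0_r in E1.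
  apply: Rmult_le_reg_r (Rmult_lt_0_compat a b Ha ltac:(lra)) _.
  field_simplify; [|lra|lra].
  have := Rmult_le_compat_r (b - a) _ _ (ltac:(lra) : 0 <= b - a) Hc.
  nra.
Qed.

Definition pois_pmf (x : R) (k : nat) : R := exp (- x) * x ^ k / INR (fact k).

Fixpoint pois_lt (n : nat) (x : R) : R :=
  match n with
  | O => 0
  | S m => pois_lt m x + pois_pmf x m
  end.

Lemma pois_pmf_ge0 (x : R) (k : nat) : 0 <= x -> 0 <= pois_pmf x k.
Proof.
  move=> Hx; apply: Rdiv_le_0_compat; last exact: INR_fact_lt_0.
  apply: Rmult_le_pos; [exact: Rlt_le (exp_pos _) | exact: pow_le].
Qed.

Lemma pois_pmf_succ (x : R) (k : nat) : INR (S k) * pois_pmf x (S k) = x * pois_pmf x k.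
Proof.
  rewrite /pois_pmf fact_simpl mult_INR -tech_pow_Rmult S_INR.
  have := INR_fact_lt_0 k; have := pos_INR k => *; field; lra.
Qed.

Lemma pois_lt_ge0 (n : nat) (x : R) : 0 <= x -> 0 <= pois_lt n x.
Proof.
  move=> Hx; elim: n => [|n IH] /=; first lra.
  have := pois_pmf_ge0 x n Hx; lra.
Qed.

Lemma pois_lt_succ_at0 (n : nat) : pois_lt (S n) 0 = 1.
Proof.
  elim: n => [|n IH]; first by rewrite /= /pois_pmf Ropp_0 exp_0 /=; field.
  rewrite -[pois_lt _ _]/(pois_lt (S n) 0 + pois_pmf 0 (S n)) IH /pois_pmf pow_i; last lia.
  rewrite Rmult_0_r /Rdiv Rmult_0_l; ring.
Qed.

Lemma is_series_pois_pmf (x : R) : is_series (pois_pmf x) 1.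
Proof.
  have := is_series_scal (exp (- x)) _ _ (is_exp_Reals x).
  rewrite /scal /= /mult /= -exp_plus Rplus_opp_l exp_0.
  apply: is_series_ext => k.
  by rewrite /pois_pmf /scal /= /mult /= pow_n_pow /Rdiv Rmult_assoc.
Qed.

Lemma is_series_pois_mean (x : R) : is_series (fun k => pois_pmf x k * INR k) x.
Proof.
  apply: is_series_decr_1.
  have -> : plus x (opp (pois_pmf x 0 * INR 0)) = scal x 1.
  { rewrite /plus /opp /scal /= /mult /=; ring. }
  apply: (is_series_ext (fun k => scal x (pois_pmf x k))).
  - by move=> k; rewrite Rmult_comm pois_pmf_succ.
  - exact: is_series_scal (is_series_pois_pmf x).
Qed.

Lemma is_derive_pois_pmf_succ (k : nat) (x : R) :
  is_derive (fun t => pois_pmf t (S k)) x (pois_pmf x k - pois_pmf x (S k)).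
Proof.
  rewrite /pois_pmf; auto_derive; first done.
  change (match k with O => 1 | S _ => INR k + 1 end) with (INR (S k)).
  rewrite fact_simpl mult_INR S_INR -tech_pow_Rmult.
  have := INR_fact_lt_0 k; have := pos_INR k => *; field; lra.
Qed.

Lemma is_derive_pois_lt_succ (n : nat) (x : R) :
  is_derive (pois_lt (S n)) x (- pois_pmf x n).
Proof.
  elim: n => [|n IH].
  - rewrite /= /pois_pmf; auto_derive; first done.
    by rewrite /=; field.
  - have -> : - pois_pmf x (S n) = - pois_pmf x n + (pois_pmf x n - pois_pmf x (S n)).
    { ring. }
    exact: is_derive_plus IH (is_derive_pois_pmf_succ n x).
Qed.

Lemma is_series_eventually_0 (u : nat -> R) (N : nat) :
  (forall k, (N < k)%nat -> u k = 0) -> is_series u (sum_n u N).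
Proof.
  move=> Hu; apply: (filterlim_ext_loc (fun _ => sum_n u N)); last exact: filterlim_const.
  exists N => n; elim: n => [|n IH] HN; first by have -> : N = 0%nat by lia.
  case: (Nat.eq_dec N (S n)) => [-> //|HNn].
  by rewrite sum_Sn Hu ?IH ?plus_zero_r //; lia.
Qed.

Lemma sum_n_pois_pmf_centered (c N : nat) (x : R) :
  sum_n (fun k => pois_pmf x k * (INR k - INR c)) N
  = x * pois_lt N x - INR c * pois_lt (S N) x.
Proof.
  elim: N => [|N IH].
  - by rewrite sum_O /=; ring.
  - rewrite sum_Sn IH; change (plus ?a ?b) with (a + b).
    rewrite Rmult_minus_distr_l [_ * INR (S N)]Rmult_comm pois_pmf_succ.
    rewrite -[pois_lt (S (S N)) x]/(pois_lt (S N) x + pois_pmf x (S N)) /=; ring.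
Qed.

(* E[min(X, c)] = c P(X > c) + sum_(k <= c) k P(X = k), and k P(X = k) = x P(X = k - 1). *)
Definition pois_min_mean (c : nat) (x : R) : R :=
  INR c * (1 - pois_lt (S c) x) + x * pois_lt c x.

Lemma is_series_pois_min (c : nat) (x : R) :
  is_series (fun k => pois_pmf x k * Rmin (INR k) (INR c)) (pois_min_mean c x).
Proof.
  set v := fun k => pois_pmf x k * (Rmin (INR k) (INR c) - INR c).
  have Hv : is_series v (x * pois_lt c x - INR c * pois_lt (S c) x).
  { rewrite -(sum_n_pois_pmf_centered c).
    rewrite -(sum_n_ext_loc v) => [|k Hk]; last by rewrite /v Rmin_left //; apply: le_INR.
    apply: is_series_eventually_0 => k Hk.
    by rewrite /v Rmin_right ?Rminus_diag ?Rmult_0_r //; apply/le_INR; lia. }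
  have -> : pois_min_mean c x
            = plus (scal (INR c) 1) (x * pois_lt c x - INR c * pois_lt (S c) x).
  { rewrite /pois_min_mean /plus /scal /= /mult /=; ring. }
  apply: (is_series_ext _ _ _ _
            (is_series_plus _ _ _ _ (is_series_scal _ _ _ (is_series_pois_pmf x)) Hv)).
  by move=> k; rewrite /v /plus /scal /= /mult /=; ring.
Qed.

Lemma pois_expect_mix_min (beta : R) (c : nat) (x : R) :
  pois_expect (fun y => beta * y + (1 - beta) * Rmin y (INR c)) x
  = beta * x + (1 - beta) * pois_min_mean c x.
Proof.
  apply: is_series_unique.
  have := is_series_plus _ _ _ _ (is_series_scal beta _ _ (is_series_pois_mean x))
            (is_series_scal (1 - beta) _ _ (is_series_pois_min c x)).
  apply: is_series_ext => k.
  by rewrite /pois_pmf /plus /scal /= /mult /=; ring.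
Qed.

Lemma is_derive_pois_min_mean (c : nat) (x : R) :
  is_derive (pois_min_mean c) x (pois_lt c x).
Proof.
  case: c => [|d].
  - apply: (is_derive_ext (fun _ => 0)); first by move=> t; rewrite /pois_min_mean /=; ring.
    exact: is_derive_const.
  - set c := S d.
    have -> : pois_lt c x
              = INR c * (0 - - pois_pmf x c) + (1 * pois_lt c x + x * - pois_pmf x d).
    { have := pois_pmf_succ x d; rewrite -/c; lra. }
    apply: is_derive_plus.
    + apply: is_derive_scal; apply: is_derive_minus; first exact: is_derive_const.
      exact: is_derive_pois_lt_succ.
    + apply: Derive.is_derive_mult; [exact: is_derive_id | exact: is_derive_pois_lt_succ].
Qed.

Lemma pois_min_mean_at0 (c : nat) : pois_min_mean c 0 = 0.
Proof. by rewrite /pois_min_mean pois_lt_succ_at0; ring. Qed.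

Lemma pois_min_mean_self (c : nat) :
  pois_min_mean c (INR c) = INR c * (1 - pois_pmf (INR c) c).
Proof. by rewrite /pois_min_mean -[pois_lt (S c) _]/(pois_lt c _ + pois_pmf _ c); ring. Qed.

Lemma pois_lt_nonincreasing (n : nat) (x y : R) :
  0 <= x <= y -> pois_lt n y <= pois_lt n x.
Proof.
  case: n => [|n] [Hx Hxy]; first by rewrite /=; lra.
  apply: (nonincreasing_of_derive_le0 _ _ _ _ (is_derive_pois_lt_succ n)) => // t Ht.
  have := pois_pmf_ge0 t n ltac:(lra); lra.
Qed.

Lemma pois_min_mean_ge (c : nat) (x : R) : (0 < c)%nat -> 0 < x ->
  (1 - pois_pmf (INR c) c) * Rmin x (INR c) <= pois_min_mean c x.
Proof.
  move=> Hc Hx; have Hc' : 0 < INR c by apply: lt_0_INR.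
  have Hm := is_derive_pois_min_mean c.
  case: (Rle_lt_dec x (INR c)) => Hxc.
  - rewrite Rmin_left //.
    have := slope_from_0_nonincreasing _ _ x (INR c) Hm (pois_min_mean_at0 c)
              (pois_lt_nonincreasing c) (conj Hx Hxc).
    rewrite pois_min_mean_self.
    have -> : INR c * (1 - pois_pmf (INR c) c) / INR c = 1 - pois_pmf (INR c) c.
    { by field; lra. }
    rewrite /Rdiv => H; apply: (Rmult_le_reg_r (/ x)); first exact: Rinv_0_lt_compat.
    rewrite Rmult_assoc Rinv_r; lra.
  - rewrite Rmin_right; last lra.
    rewrite Rmult_comm -pois_min_mean_self.
    apply: (nondecreasing_of_derive_ge0 _ _ _ _ Hm); last lra.
    by move=> t Ht; apply: pois_lt_ge0; lra.
Qed.

Lemma mix_ratio_ge (beta x mu m p : R) :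
  0 <= beta <= 1 -> 0 < mu <= x -> 0 <= p -> (1 - p) * mu <= m ->
  1 - (1 - beta) * p <= (beta * x + (1 - beta) * m) / (beta * x + (1 - beta) * mu).
Proof.
  move=> Hbeta Hmu Hp Hm.
  have HD : mu <= beta * x + (1 - beta) * mu by nra.
  apply/Rle_div_r; first lra.
  have := Rmult_le_compat_l ((1 - beta) * p) _ _ ltac:(nra) HD.
  have := Rmult_le_compat_l (1 - beta) _ _ ltac:(lra) Hm.
  nra.
Qed.

Theorem mainTheorem11 (c : nat) (beta : R) :
  (1 <= c)%nat -> 0 <= beta <= 1 ->
  alpha_phi (fun x => beta * x + (1 - beta) * Rmin x (INR c)) =
  Finite (1 - (1 - beta) * (INR c ^ c * exp (- INR c) / INR (fact c))).
Proof.
  move=> Hc Hbeta.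
  have -> : INR c ^ c * exp (- INR c) / INR (fact c) = pois_pmf (INR c) c.
  { by rewrite /pois_pmf; field; apply: INR_fact_neq_0. }
  have Hc1 : 1 <= INR c by apply: (le_INR 1).
  apply: is_glb_Rbar_unique; split.
  - move=> _ [n [Hn ->]] /=.
    have Hn1 : 1 <= INR n by apply: (le_INR 1).
    rewrite pois_expect_mix_min.
    apply: mix_ratio_ge => //.
    + split; [apply: Rmin_glb_lt; lra | exact: Rmin_l].
    + apply: pois_pmf_ge0; lra.
    + apply: pois_min_mean_ge; [lia | lra].
  - move=> b Hb; apply: Hb; exists c; split => //.
    rewrite pois_expect_mix_min pois_min_mean_self Rmin_left; last lra.
    field; lra.
Qed.
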